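(* Let $X$ be a nonnegative real-valued random variable and $\Lambda(\lambda)=\log\mathbb E[e^{\lambda X}]$, with Fenchel–Legendre transform $\Lambda^\star(x)=\sup_{\lambda\in\mathbb R}(\lambda x-\Lambda(\lambda))$. Then $$\lim_{\nu\downarrow0}\nu\Lambda^\star(1/\nu)=\sup\{\lambda:\Lambda(\lambda)<\infty\}.$$ *)

From HB Require Import structures.
From mathcomp Require Import all_boot all_order all_algebra.
From mathcomp Require Import all_classical all_reals all_analysis.
Set Implicit Arguments. Unset Strict Implicit. Unset Printing Implicit Defensive.
Import Order.TTheory GRing.Theory Num.Theory.
Import numFieldNormedType.Exports.
Local Open Scope classical_set_scope.
Local Open Scope ring_scope.

Definition log_mgf d (T : measurableType d) (R : realType)
  (P : probability T R) (X : T -> R) (l : R) : \bar R :=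
  lne (\int[P]_x (expR (l * X x))%:E).

Definition fenchel_legendre (R : realType) (L : R -> \bar R) (x : R) : \bar R :=
  ereal_sup [set ((l * x)%:E - L l)%E | l in [set: R]].

From HB Require Import structures.
From mathcomp Require Import all_boot all_order all_algebra.
From mathcomp Require Import all_classical all_reals all_analysis.
From mathcomp Require Import measurable_realfun lra.
Set Implicit Arguments.
Unset Strict Implicit.
Unset Printing Implicit Defensive.
Import Order.TTheory GRing.Theory Num.Theory.
Import numFieldNormedType.Exports.
Local Open Scope classical_set_scope.
Local Open Scope ring_scope.

(* For l >= 0 the log-moment generating function L is nonnegative because X is,
   and for l <= 0 it is bounded below by the affine function l M + ln P(X <= M),
   where M is any level with P(X <= M) > 0.  Now nu L*(1/nu) is the supremum of
   l - nu L(l).  Each l in the domain of L contributes l - nu L(l) -> l, which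
   gives the lower bound.  Conversely, once nu M <= 1, the terms with l >= 0 are
   at most l <= s := sup dom L, and those with l < 0 at most - nu ln P(X <= M),
   so nu L*(1/nu) <= s - nu ln P(X <= M) -> s. *)

Lemma near_right0_mulr_lt (R : realType) (K e : R) : 0 < e ->
  \forall nu \near (0 : R)^'+, nu * K < e.
Proof.
move=> e0; have eK0 : 0 < e / (`|K| + 1) by rewrite divr_gt0// ltr_wpDl.
near=> nu.
have nu0 : 0 < nu by near: nu; exact: nbhs_right_gt.
have : nu < e / (`|K| + 1) by near: nu; exact: nbhs_right_lt.
rewrite ltr_pdivlMr ?ltr_wpDl// => nuKe.
have : nu * K <= nu * `|K| by apply: ler_wpM2l; [exact: ltW | exact: ler_norm].
lra.
Unshelve. all: by end_near.
Qed.

Lemma cvge_EFin_between {T : Type} {F : set_system T} {FF : Filter F}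
    (R : realType) (f : T -> \bar R) (s : R) :
  (forall e, 0 < e -> \forall t \near F, ((s - e)%:E <= f t <= (s + e)%:E)%E) ->
  f @ F --> s%:E.
Proof.
move=> fs; apply/fine_cvgP; split.
  apply: filterS (fs 1 ltr01) => t /andP[sf fs1].
  by rewrite fin_numElt (lt_le_trans (ltNyr _) sf) (le_lt_trans fs1 (ltry _)).
apply/cvgrPdist_le => e e0; apply: filterS (fs e e0) => t /andP[sf fs'].
have ft : f t = (fine (f t))%:E.
  by rewrite fineK// fin_numElt (lt_le_trans (ltNyr _) sf) (le_lt_trans fs' (ltry _)).
rewrite ft !lee_fin in sf fs'; rewrite /= ler_norml; lra.
Qed.

Section fenchel_legendre_scaling.
Local Open Scope ereal_scope.
Context (R : realType) (L : R -> \bar R).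

Lemma fenchel_legendre_ge (l x : R) : (l * x)%:E - L l <= fenchel_legendre L x.
Proof. by apply: ereal_sup_ubound; exists l. Qed.

Lemma mul_fenchel_legendre_inv_ge (l a nu : R) : L l = a%:E -> (0 < nu)%R ->
  (l - nu * a)%:E <= nu%:E * fenchel_legendre L nu^-1.
Proof.
move=> La nu0; have nu0' : 0 <= nu%:E by rewrite lee_fin ltW.
have := fenchel_legendre_ge l nu^-1.
rewrite La -EFinB => /(lee_wpmul2l nu0'); apply: le_trans.
by rewrite -EFinM mulrBr mulrCA mulfV ?gt_eqF// mulr1.
Qed.

Variables (M c : R).
Hypothesis c_ge0 : (0 <= c)%R.
Hypothesis L_ge0 : forall l, (0 <= l)%R -> 0 <= L l.
Hypothesis L_ge_affine : forall l, (l <= 0)%R -> (l * M - c)%:E <= L l.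
Hypothesis L0_lty : L 0 < +oo.

Let D := [set l : R | L l < +oo].
Let S := ereal_sup [set l%:E | l in D].

Lemma dom_EFin (l : R) : L l < +oo -> exists a, L l = a%:E.
Proof.
move=> Lly; exists (fine (L l)); rewrite fineK// fin_numElt Lly andbT.
have [l0|l0] := leP 0%R l; first by rewrite (lt_le_trans _ (L_ge0 l0)) ?ltNy0.
exact: lt_le_trans (ltNyr _) (L_ge_affine (ltW l0)).
Qed.

Lemma sup_dom_ge0 : 0 <= S.
Proof. by apply: ereal_sup_ubound; exists 0%R. Qed.

Lemma fenchel_legendre_le_sup_dom (s x : R) : S = s%:E -> (0 < x)%R -> (M <= x)%R ->
  fenchel_legendre L x <= (s * x + c)%:E.
Proof.
move=> Ss x0 Mx; have s0 : (0 <= s)%R by rewrite -lee_fin -Ss sup_dom_ge0.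
apply: ge_ereal_sup => _ [l _ <-].
have [Lly|] := ltP (L l) +oo; last first.
  by rewrite leye_eq => /eqP ->; rewrite leNye.
have [a La] := dom_EFin Lly; rewrite La -EFinB lee_fin.
have [l0|l0] := leP 0%R l.
- have a0 : (0 <= a)%R by rewrite -lee_fin -La L_ge0.
  have : l%:E <= S by apply: ereal_sup_ubound; exists l.
  rewrite Ss lee_fin => /(ler_wpM2r (ltW x0)); have := c_ge0; lra.
- have := L_ge_affine (ltW l0); rewrite La lee_fin => Ma.
  have : (l * (x - M) <= 0)%R by rewrite mulr_le0_ge0 ?subr_ge0 // ltW.
  have : (0 <= s * x)%R by rewrite mulr_ge0// ltW.
  lra.
Qed.

Lemma near_mul_fenchel_legendre_inv_ge (l e : R) : L l < +oo -> (0 < e)%R ->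
  \forall nu \near (0 : R)^'+, (l - e)%:E <= nu%:E * fenchel_legendre L nu^-1.
Proof.
move=> Lly e0; have [a La] := dom_EFin Lly.
near=> nu; apply: le_trans (mul_fenchel_legendre_inv_ge La _); last first.
  by near: nu; exact: nbhs_right_gt.
rewrite lee_fin; suff : (nu * a < e)%R by lra.
by near: nu; exact: near_right0_mulr_lt.
Unshelve. all: by end_near.
Qed.

Lemma near_mul_fenchel_legendre_inv_le (s e : R) : S = s%:E -> (0 < e)%R ->
  \forall nu \near (0 : R)^'+, nu%:E * fenchel_legendre L nu^-1 <= (s + e)%:E.
Proof.
move=> Ss e0; near=> nu.
have nu0 : (0 < nu)%R by near: nu; exact: nbhs_right_gt.
have Mnu : (M <= nu^-1)%R.
  rewrite -[(nu^-1)%R]mul1r ler_pdivlMr // mulrC ltW //.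
  by near: nu; exact: near_right0_mulr_lt.
have invnu0 : (0 < nu^-1)%R by rewrite invr_gt0.
have := fenchel_legendre_le_sup_dom Ss invnu0 Mnu.
have nu0' : 0 <= nu%:E by rewrite lee_fin ltW.
move=> /(lee_wpmul2l nu0') le_FL; apply: le_trans le_FL _.
rewrite -EFinM lee_fin mulrDr mulrCA mulfV ?gt_eqF// mulr1 lerD2l ltW//.
by near: nu; exact: near_right0_mulr_lt.
Unshelve. all: by end_near.
Qed.

Theorem mul_fenchel_legendre_inv_cvg :
  nu%:E * fenchel_legendre L nu^-1 @[nu --> (0 : R)^'+] --> S.
Proof.
case Ss : S => [s| |]; last by have := sup_dom_ge0; rewrite Ss.
- apply: cvge_EFin_between => e e0.
  have /ereal_sup_gt[_ [l Dl <-]] : (s - e / 2)%:E < S by rewrite Ss lte_fin; lra.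
  rewrite lte_fin => sel.
  near=> nu; apply/andP; split.
    apply: le_trans (_ : (l - e / 2)%:E <= _); first by rewrite lee_fin; lra.
    by near: nu; apply: near_mul_fenchel_legendre_inv_ge; rewrite ?divr_gt0.
  by near: nu; exact: near_mul_fenchel_legendre_inv_le.
- apply/cvgeyPge => A.
  have /ereal_sup_gt[_ [l Dl <-]] : (A + 1)%:E < S by rewrite Ss ltey.
  rewrite lte_fin => Al.
  near=> nu; apply: le_trans (_ : (l - 1)%:E <= _); first by rewrite lee_fin; lra.
  by near: nu; exact: near_mul_fenchel_legendre_inv_ge.
Unshelve. all: by end_near.
Qed.

End fenchel_legendre_scaling.

Section moment_generating_function.
Local Open Scope ereal_scope.
Context d (T : measurableType d) (R : realType) (P : probability T R).
Variable X : {RV P >-> R}.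

Lemma mmt_gen_funE l : 'M_P X l = \int[P]_x (expR (l * X x)%R)%:E.
Proof.
rewrite /mmt_gen_fun unlock; apply: eq_integral => x _.
by rewrite /= mulrC.
Qed.

Lemma log_mgfE l : log_mgf P X l = lne ('M_P X l).
Proof. by rewrite mmt_gen_funE. Qed.

Lemma measurable_expR_mul l : measurable_fun [set: T] (fun x => (expR (l * X x)%R)%:E).
Proof.
apply/measurable_EFinP; apply: measurableT_comp => //.
exact: measurable_funM.
Qed.

Lemma mmt_gen_fun_ge0 l : 0 <= 'M_P X l.
Proof. by rewrite mmt_gen_funE; apply: integral_ge0 => x _; rewrite lee_fin expR_ge0. Qed.

Lemma mmt_gen_fun0 : 'M_P X 0 = 1.
Proof.
rewrite mmt_gen_funE (eq_integral (cst 1)) => [|x _]; last by rewrite mul0r expR0.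
by rewrite integral_cst// mul1e; exact: probability_setT.
Qed.

Lemma mmt_gen_fun_ge1 l : (0 <= l)%R -> (forall t, 0 <= X t)%R -> 1 <= 'M_P X l.
Proof.
move=> l0 X0; rewrite -mmt_gen_fun0 !mmt_gen_funE; apply: ge0_le_integral => //.
- exact: measurable_expR_mul.
- exact: measurable_expR_mul.
- by move=> x _; rewrite lee_fin ler_expR !mul0r mulr_ge0.
Qed.

Lemma measurable_sublevel (M : R) : measurable (X @^-1` `]-oo, M]).
Proof. exact: measurable_funPTI. Qed.

Lemma mmt_gen_fun_ge_sublevel (l M : R) : (l <= 0)%R ->
  (expR (l * M))%:E * P (X @^-1` `]-oo, M]) <= 'M_P X l.
Proof.
move=> l0; have mA := measurable_sublevel M.
rewrite mmt_gen_funE -integral_cst//.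
apply: (@le_trans _ _ (\int[P]_(x in X @^-1` `]-oo, M]) (expR (l * X x)%R)%:E)).
  apply: ge0_le_integral => //.
  - by move=> x _; rewrite lee_fin expR_ge0.
  - exact: measurable_funTS (measurable_expR_mul l).
  - by move=> x; rewrite /= in_itv/= => XM; rewrite lee_fin ler_expR ler_wnM2l.
apply: ge0_subset_integral => //; exact: measurable_expR_mul.
Qed.

Lemma exists_sublevel_gt0 : exists M : R, 0 < P (X @^-1` `]-oo, M]).
Proof.
apply: contrapT => /forallNP P0.
have : 1 <= 0 :> \bar R.
  apply: cvge_to_le (cvg_cdfy1 X) _.
  by near=> x; rewrite leNgt; apply/negP; exact: P0.
by rewrite lee_fin ler10.
Unshelve. all: by end_near.
Qed.

Lemma log_mgf_ge0 l : (0 <= l)%R -> (forall t, 0 <= X t)%R -> 0 <= log_mgf P X l.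
Proof. by move=> l0 X0; rewrite log_mgfE lne_ge0 mmt_gen_fun_ge1. Qed.

Lemma log_mgf_ge_affine : exists M c : R, (0 <= c)%R /\
  forall l, (l <= 0)%R -> (l * M - c)%:E <= log_mgf P X l.
Proof.
have [M PM] := exists_sublevel_gt0.
have mA := measurable_sublevel M.
pose p := fine (P (X @^-1` `]-oo, M])).
have PA : P (X @^-1` `]-oo, M]) = p%:E by rewrite fineK// fin_num_measure.
have p0 : (0 < p)%R by rewrite -lte_fin -PA.
have p1 : (p <= 1)%R by rewrite -lee_fin -PA probability_le1.
exists M, (- ln p)%R; split; first by rewrite oppr_ge0 ln_le0.
move=> l l0; have ep0 : (0 < expR (l * M) * p)%R by rewrite mulr_gt0 ?expR_gt0.
have -> : (l * M - - ln p)%:E = lne (expR (l * M) * p)%:E.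
  by rewrite lne_EFin// lnM ?posrE ?expR_gt0// expRK opprK.
rewrite log_mgfE lee_lne ?in_itv/= ?leey ?mmt_gen_fun_ge0 ?lee_fin ?(ltW ep0)//.
by rewrite EFinM -PA mmt_gen_fun_ge_sublevel.
Qed.

End moment_generating_function.

Theorem proposition2p5 (d : measure_display) (T : measurableType d)
  (R : realType) (P : probability T R) (X : {RV P >-> R})
  (hX : forall t, 0 <= X t) :
  ((nu%:E * fenchel_legendre (log_mgf P X) nu^-1)%E @[nu --> 0^'+] -->
   ereal_sup [set l%:E | l in [set l : R | (log_mgf P X l < +oo)%E]]).
Proof.
have [M [c [c0 log_mgf_ge]]] := log_mgf_ge_affine X.
apply: (mul_fenchel_legendre_inv_cvg c0 _ log_mgf_ge).
- by move=> l l0; exact: log_mgf_ge0.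
- by rewrite log_mgfE mmt_gen_fun0 lne1 ltry.
Qed.
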